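(* Let $p\ge 1$ be an integer. Define integers $\pi_r(m)$ for $r\ge1$ and $m\ge 0$ recursively by $\pi_1(m)=0$ and, for $r\ge 2$, $$\pi_r(m)=\sum_{k=0}^{r-1}r^k\,\mathbf{d}_r\!\left(\mathbf{d}_r\!\left(0,\ \mathbf{d}_r\!\left(0,\tfrac{m}{(r-1)!}\right)+k\right),\ (r-1)r^{r-1}+\sum_{j=0}^{r-2}r^j\,\mathbf{d}_{r-1}\!\left(j,\pi_{r-1}(m)\right)\right).$$ Then for each integer $m$ with $0\le m\le p!-1$ there is a permutation $\sigma_m$ of $\{0,1,\ldots,p-1\}$ with $\pi_p(m)=\sum_{k=0}^{p-1}p^k\sigma_m(k)$ (i.e. the radix-$p$ digits $\mathbf{d}_p(k,\pi_p(m))$, $k=0,\ldots,p-1$, are a rearrangement of $0,\ldots,p-1$), and $m\mapsto\sigma_m$ is a bijection from $\{0,\ldots,p!-1\}$ onto the set of all $p!$ permutations of $\{0,\ldots,p-1\}$; thus $\pi_p(m)$ is the $m$-th permutation in an enumeration of all permutations of $p$ symbols.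
   Context: For an integer $p\ge 2$, an integer $k\ge 0$ and a real number $x\ge0$, the digit function is $\mathbf{d}_p(k,x)=\lfloor x/p^k\rfloor-p\lfloor x/p^{k+1}\rfloor$; by convention $\mathbf{d}_1(k,x)=0$ for all $k,x$. A permutation $\sigma$ of $\{0,\ldots,p-1\}$ is encoded by the integer $\sum_{k=0}^{p-1}p^k\sigma(k)$, whose $k$-th radix-$p$ digit is the image of $k$. *)

From mathcomp Require Import all_boot all_order fingroup perm.
Set Implicit Arguments. Unset Strict Implicit. Unset Printing Implicit Defensive.

(* Digit function d_p(k, x) evaluated at the nonnegative rational x = a / b
   (b > 0):  floor(x / p^k) - p * floor(x / p^(k+1)), where
   floor((a/b)/p^k) = a %/ (b * p^k).  Convention d_1(k, x) = 0.
   (For p = 0 the function is never used.) *)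
Definition digitq (p k a b : nat) : nat :=
  if p == 1 then 0
  else a %/ (b * p ^ k) - p * (a %/ (b * p ^ k.+1)).

Definition digit (p k x : nat) : nat := digitq p k x 1.

(* piaux n m = pi_{n+1}(m). *)
Fixpoint piaux (n m : nat) : nat :=
  match n with
  | 0 => 0
  | n'.+1 =>
      let r := n'.+2 in
      let prev := piaux n' m in
      let A := (r - 1) * r ^ (r - 1)
               + \sum_(j < r - 1) r ^ j * digit (r - 1) j prev in
      \sum_(k < r)
        r ^ k * digit r (digit r 0 (digitq r 0 m (r - 1)`! + k)) A
  end.

Definition pi_rec (r m : nat) : nat := piaux r.-1 m.

From mathcomp Require Import all_boot all_order fingroup perm ssralg zmodp.
Import GRing.Theory.

Set Implicit Arguments.
Unset Strict Implicit.
Unset Printing Implicit Defensive.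

(* The radix-(n+1) digits of pi_(n+1)(m) are the values of a permutation
   s_n(m) of {0, ..., n}.  In the recursion, A is the code of s_n(m) extended
   by the fixed point n+1, and digit k of pi_(n+2)(m) is digit (c + k) mod (n+2)
   of A, where c = floor(m / (n+1)!) mod (n+2).  So s_(n+1)(m) is a rotation by
   c followed by that extension, a permutation by construction.  The position
   that s_(n+1)(m) sends to n+1 determines c, and then s_(n+1)(m) determines
   s_n(m).  Inductively s_n(m) determines m mod (n+1)!, so m |-> s_n(m) is
   injective on {0, ..., (n+1)! - 1}, hence onto the (n+1)! permutations. *)

Lemma digitqE r i a b : r != 1 -> digitq r i a b = a %/ (b * r ^ i) %% r.
Proof.
rewrite /digitq => /negbTE ->; rewrite expnSr mulnA (divnMA a (b * r ^ i) r).
by rewrite {1}(divn_eq (a %/ (b * r ^ i)) r) [r * _]mulnC addKn.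
Qed.

Lemma digitE r i x : r != 1 -> digit r i x = x %/ r ^ i %% r.
Proof. by move=> r_neq1; rewrite /digit digitqE // mul1n. Qed.

Lemma digit_sum r N (a : nat -> nat) i : 1 < r ->
  (forall j, j < N -> a j < r) -> i < N ->
  digit r i (\sum_(j < N) r ^ j * a j) = a i.
Proof.
move=> r_gt1; have r_neq1 : r != 1 by rewrite neq_ltn r_gt1 orbT.
elim: N a i => [//|N IHN] a i a_lt i_lt; rewrite digitE // big_ord_recl expn0 mul1n.
have -> : \sum_(j < N) r ^ bump 0 j * a (bump 0 j)
          = r * \sum_(j < N) r ^ j * a j.+1.
  by rewrite big_distrr; apply: eq_bigr => j _; rewrite /bump /= add1n expnS mulnA.
have a0_lt : a 0 < r by apply: a_lt.
case: i i_lt => [_|i i_lt].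
  by rewrite expn0 divn1 addnC mulnC modnMDl modn_small.
rewrite expnS divnMA mulnC addnC divnMDl ?(ltn_trans _ r_gt1) //.
rewrite (divn_small a0_lt) addn0 -digitE //.
by apply: (IHN (fun j => a j.+1)) => // j j_lt; apply: a_lt.
Qed.

Definition perm_code r (s : {perm 'I_r}) : nat := \sum_(k < r) r ^ k * s k.

Lemma digit_perm_code r (s : {perm 'I_r}) (i : 'I_r) :
  digit r i (perm_code s) = s i.
Proof.
case: r s i => [|[|r]] s i; first by case: i.
  by rewrite /digit /digitq; case: (s i) => -[].
have -> : perm_code s = \sum_(j < r.+2) r.+2 ^ j * s (inord j).
  by apply: eq_bigr => k _; rewrite inord_val.
by rewrite (@digit_sum _ _ (fun j => s (inord j))) ?inord_val // => j _.
Qed.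

Definition rot_perm n (c : 'I_n.+1) : {perm 'I_n.+1} := perm (addrI c).

Definition ext_perm n (s : {perm 'I_n.+1}) : {perm 'I_n.+2} :=
  lift_perm ord_max ord_max s.

Lemma rot_permE n (c k : 'I_n.+1) : rot_perm c k = (c + k) %% n.+1 :> nat.
Proof. by rewrite permE. Qed.

Lemma ext_perm_max n (s : {perm 'I_n.+1}) : ext_perm s ord_max = ord_max.
Proof. exact: lift_perm_id. Qed.

Lemma ext_permE n (s : {perm 'I_n.+1}) (k : 'I_n.+1) :
  ext_perm s (widen_ord (leqnSn _) k) = s k :> nat.
Proof.
have -> : widen_ord (leqnSn _) k = lift ord_max k.
  by apply: val_inj; rewrite /= /bump leqNgt ltn_ord.
by rewrite /ext_perm lift_perm_lift /= /bump leqNgt ltn_ord.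
Qed.

Lemma ext_perm_inj n : injective (@ext_perm n).
Proof.
move=> s s' eq_ext; apply/permP => k; apply: ord_inj.
by rewrite -(ext_permE s) -(ext_permE s') eq_ext.
Qed.

Lemma perm_code_ext n (s : {perm 'I_n.+1}) :
  perm_code (ext_perm s) = n.+1 * n.+2 ^ n.+1 + \sum_(k < n.+1) n.+2 ^ k * s k.
Proof.
rewrite /perm_code big_ord_recr /= ext_perm_max addnC mulnC; congr (_ + _).
by apply: eq_bigr => k _; rewrite ext_permE.
Qed.

Fixpoint pi_perm n m : {perm 'I_n.+1} :=
  if n is n'.+1 then rot_perm (inZp (m %/ n'.+1`!)) * ext_perm (pi_perm n' m)
  else 1.

Lemma piaux_perm_code n m : piaux n m = perm_code (pi_perm n m).
Proof.
elim: n => [|n IHn]; first by rewrite /perm_code big_ord1 (ord1 (_ ord0)).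
set s := pi_perm n m; set c : 'I_n.+2 := inZp (m %/ n.+1`!).
have A_code : (n.+2 - 1) * n.+2 ^ (n.+2 - 1)
      + \sum_(j < n.+2 - 1) n.+2 ^ j * digit (n.+2 - 1) j (piaux n m)
    = perm_code (ext_perm s).
  rewrite perm_code_ext subn1 IHn; congr (_ + _).
  by apply: eq_bigr => j _; rewrite digit_perm_code.
rewrite /= A_code; apply: eq_bigr => k _; congr (_ * _).
have -> : digit n.+2 0 (digitq n.+2 0 m (n.+2 - 1)`! + k) = rot_perm c k.
  by rewrite digitE // digitqE // !expn0 divn1 muln1 subn1 rot_permE /= modnDml.
by rewrite digit_perm_code permM.
Qed.

Lemma rot_ext_perm_inj n (c c' : 'I_n.+2) (s s' : {perm 'I_n.+1}) :
  (rot_perm c * ext_perm s = rot_perm c' * ext_perm s')%g -> c = c' /\ s = s'.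
Proof.
move=> eq_perm; pose k := ((rot_perm c)^-1)%g ord_max.
have rot_k : rot_perm c k = ord_max by rewrite permKV.
(* ord_max is the only point that ext_perm s' sends to ord_max. *)
have rot'_k : rot_perm c' k = ord_max.
  apply: (@perm_inj _ (ext_perm s')); rewrite ext_perm_max -permM -eq_perm.
  by rewrite permM rot_k ext_perm_max.
have eq_c : c = c'.
  apply: (addIr k); have : rot_perm c k = rot_perm c' k by rewrite rot_k rot'_k.
  by rewrite !permE.
split=> //; apply: ext_perm_inj; apply: (mulgI (rot_perm c)).
by rewrite eq_perm eq_c.
Qed.

Lemma modn_mul_divn m a b : 0 < b -> m %% (a * b) = m %/ b %% a * b + m %% b.
Proof.
move=> b_gt0; rewrite modn_divl {1}(divn_eq (m %% (a * b)) b).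
by rewrite modn_dvdm // dvdn_mull.
Qed.

Lemma pi_perm_eq_mod n m m' :
  pi_perm n m = pi_perm n m' -> m = m' %[mod n.+1`!].
Proof.
elim: n => [|n IHn] /=; first by rewrite !modn1.
case/rot_ext_perm_inj => /(congr1 val) /= eq_c /IHn eq_mod.
by rewrite factS !(modn_mul_divn _ n.+2 (fact_gt0 n.+1)) eq_c eq_mod.
Qed.

Theorem mainTheorem7 (p : nat) (hp : 1 <= p) :
  exists sigma : 'I_(p`!) -> {perm 'I_p},
    bijective sigma /\
    forall m : 'I_(p`!), pi_rec p m = \sum_(k < p) (p ^ k * sigma m k)%N.
Proof.
case: p hp => // n _.
exists (fun m : 'I_(n.+1`!) => pi_perm n m); split.
  apply: inj_card_bij; last by rewrite card_ord card_Sn.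
  move=> m m' /pi_perm_eq_mod; rewrite !modn_small // => eq_m.
  exact: val_inj.
by move=> m; rewrite /pi_rec piaux_perm_code.
Qed.
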